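(* For every $g\in\mathscr T'$, the map $e^{a(g)}:\mathcal F_{\rm fin}(\mathscr T)\to\mathcal F_{\rm fin}(\mathscr T)$ is injective.
   Context: Let $\mathfrak h$ be a complex Hilbert space, $\mathscr T$ a topological vector space continuously embedded in $\mathfrak h$ with dense image, and $\mathscr T'$ the space of continuous antilinear functionals on $\mathscr T$; write $\langle\varphi,f\rangle:=\overline{\varphi(f)}$ for $\varphi\in\mathscr T'$, $f\in\mathscr T$. $\mathcal F(\mathfrak h)$ is the symmetric Fock space over $\mathfrak h$, and $\mathcal F_{\rm fin}(\mathscr T)$ the space of vectors with finitely many nonzero components, the $n$-th in the algebraic symmetric tensor product of $n$ copies of $\mathscr T$. For $g\in\mathscr T'$, $a(g):\mathcal F_{\rm fin}(\mathscr T)\to\mathcal F_{\rm fin}(\mathscr T)$ is defined linearly by $(a(g)\Psi)_n=\frac{\sqrt{n+1}}{(n+1)!}\sum_{\sigma\in S_{n+1}}\langle g,\psi_{\sigma(1)}\rangle\,\psi_{\sigma(2)}\otimes\cdots\otimes\psi_{\sigma(n+1)}$ for $\Psi_{n+1}=\psi_1\otimes_s\cdots\otimes_s\psi_{n+1}$, and $e^{a(g)}:=\sum_{k\ge0}a(g)^k/k!$, which is a finite sum on each vector of $\mathcal F_{\rm fin}(\mathscr T)$. *)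

From HB Require Import structures.
From mathcomp Require Import all_boot all_order all_algebra all_fingroup.
From mathcomp Require Import complex.
From mathcomp Require Import all_classical all_reals topology normedtype tvs.
Import Order.TTheory GRing.Theory Num.Theory.
Import numFieldTopology.Exports.

Set Implicit Arguments.
Unset Strict Implicit.
Unset Printing Implicit Defensive.

Local Open Scope ring_scope.

Section Defs.
Variable R : realType.
Local Notation C := R[i].

Section Hilbert.
Variable H : lmodType C.
Variable ip : H -> H -> C.

Definition hnorm (x : H) : R := Num.sqrt (complex.Re (ip x x)).

Definition is_inner_product : Prop :=
  [/\ (forall (a : C) (x y z : H), ip x (a *: y + z) = a * ip x y + ip x z),
      (forall x y : H, ip y x = (ip x y)^*),
      (forall x : H, 0 <= ip x x) &
      (forall x : H, ip x x = 0 -> x = 0)].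

Definition is_complete_ip : Prop :=
  forall u : nat -> H,
    (forall e : R, 0 < e -> exists N : nat, forall m n : nat,
        (N <= m)%N -> (N <= n)%N -> hnorm (u m - u n) < e) ->
    exists l : H, forall e : R, 0 < e -> exists N : nat, forall n : nat,
        (N <= n)%N -> hnorm (u n - l) < e.

Definition is_hilbert : Prop := is_inner_product /\ is_complete_ip.
End Hilbert.

Definition continuous_dense_embedding (T : topologicalLmodType C)
    (H : lmodType C) (ip : H -> H -> C) (iota : T -> H) : Prop :=
  [/\ (forall (a : C) (x y : T), iota (a *: x + y) = a *: iota x + iota y),
      injective iota,
      (forall (x : T) (e : R), 0 < e ->
          \forall y \near x, hnorm ip (iota y - iota x) < e) &
      (forall (v : H) (e : R), 0 < e -> exists f : T, hnorm ip (v - iota f) < e)].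

Definition in_antidual (T : topologicalLmodType C) (g : T -> C) : Prop :=
  (forall (a : C) (x y : T), g (a *: x + y) = a^* * g x + g y) /\
  continuous (fun x : T => (g x : C^o)).

Definition pairing (T : Type) (g : T -> C) (f : T) : C := (g f)^*.

(* Vectors of F_fin(T).  A vector is represented by a finite formal    *)
(* linear combination of symmetric products: the entry (c, [:: p_1;..; *)
(* p_n]) stands for  c * (p_1 (x)_s ... (x)_s p_n)  in the n-th        *)
(* component.  Every vector of F_fin(T) has such a representation      *)
(* (finitely many components, each in the algebraic symmetric tensor   *)
(* power, which is spanned by symmetric products).                     *)
Definition fock (T : Type) := seq (C * seq T).

Section Fock.
Variables (T : lmodType C) (H : lmodType C) (ip : H -> H -> C) (iota : T -> H).

(* Pairing of p_1 (x)_s ... (x)_s p_n (viewed in h^{(x) n}, with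
   p (x)_s ... := (1/n!) sum_sigma p_sigma(1) (x) ... ) against the product
   vector f_1 (x) ... (x) f_n of h^{(x) n}. *)
Definition sym_eval (s : seq T) (fs : seq H) : C :=
  ((size s)`!%:R)^-1 *
  \sum_(sigma : 'S_(size s))
     \prod_(i < size s) ip (nth 0 fs i) (iota (nth 0 s (sigma i))).

Definition fock_pair (Psi : fock T) (n : nat) (fs : seq H) : C :=
  \sum_(x <- Psi | size x.2 == n) x.1 * sym_eval x.2 fs.

(* Equality of the represented vectors of F_fin(T) (subset of F(h)):
   two vectors agree iff all their components agree, and an element of
   h^{(x) n} is determined by its pairings with product vectors. *)
Definition fock_eq (Psi Phi : fock T) : Prop :=
  forall (n : nat) (fs : seq H), size fs = n ->
    fock_pair Psi n fs = fock_pair Phi n fs.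
End Fock.

Section Annihilation.
Variables (T : lmodType C) (g : T -> C).

(* a(g) on a symmetric product of n+1 vectors:
   sqrt(n+1)/(n+1)! * sum_{sigma in S_{n+1}} <g, p_sigma(1)>
                       p_sigma(2) (x) ... (x) p_sigma(n+1);
   a(g) kills the 0-th component. *)
Definition ann_gen (x : C * seq T) : fock T :=
  match size x.2 with
  | 0 => [::]
  | m.+1 =>
    [seq (x.1 * (sqrtC (m.+1)%:R / (m.+1)`!%:R)
               * pairing g (nth 0 x.2 (sigma ord0)),
          [seq nth 0 x.2 (sigma (lift ord0 j)) | j <- enum 'I_m])
    | sigma : 'S_m.+1 <- enum [set: 'S_m.+1]]
  end.

Definition ann (Psi : fock T) : fock T := flatten (map ann_gen Psi).

Definition fock_scale (k : C) (Psi : fock T) : fock T :=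
  [seq (k * x.1, x.2) | x <- Psi].

Definition maxdeg (Psi : fock T) : nat := \max_(x <- Psi) size x.2.

(* e^{a(g)} = sum_{k >= 0} a(g)^k / k!; on the representation, a(g)^k Psi
   is the empty combination as soon as k > maxdeg Psi, so the sum below is
   the full (finite) series. *)
Definition exp_ann (Psi : fock T) : fock T :=
  flatten [seq fock_scale ((k`!%:R)^-1) (iter k ann Psi)
          | k <- iota 0 (maxdeg Psi).+1].
End Annihilation.

End Defs.

From HB Require Import structures.
From mathcomp Require Import all_boot all_order all_algebra all_fingroup.
From mathcomp Require Import complex.
From mathcomp Require Import all_classical all_reals topology normedtype tvs.
Import Order.TTheory GRing.Theory Num.Theory.
Import numFieldTopology.Exports.
Local Open Scope ring_scope.

Set Implicit Arguments.
Unset Strict Implicit.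
Unset Printing Implicit Defensive.

(* Only finitely many vectors of T occur in Psi and Phi, so a finite
   Gram-Schmidt argument yields h in the Hilbert space with <h, f> = <g, f>
   for all of them.  Against such an h, a(g) is the adjoint of creation by h:
   the n-th component of a(g) Psi paired with f_1 (x) ... (x) f_n is
   sqrt(n+1) times the (n+1)-th component of Psi paired with
   h (x) f_1 (x) ... (x) f_n.  Hence the n-th component of e^{a(g)} Psi is
   the n-th component of Psi plus a combination of higher components of Psi;
   this unitriangular system is solved from the top degree downwards. *)

Section FiniteRiesz.
Variables (C : numClosedFieldType) (V : lmodType C) (form : V -> V -> C).
Hypothesis form_scalar : forall x, scalar (form x).
Hypothesis form_conj : forall x y, form y x = (form x y)^*.
Hypothesis form_definite : forall x, form x x = 0 -> x = 0.

Inductive in_span (L : seq V) : V -> Prop :=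
| in_span0 : in_span L 0
| in_span_mem v : v \in L -> in_span L v
| in_span_lin a x y : in_span L x -> in_span L y -> in_span L (a *: x + y).

Lemma in_span_cons v L t : in_span L t -> in_span (v :: L) t.
Proof.
elim=> [|w wL|a x y _ span_x _ span_y]; first exact: in_span0; last exact: in_span_lin.
by apply: in_span_mem; rewrite inE wL orbT.
Qed.

Lemma scalar_eq_in_span (F G : V -> C) L : scalar F -> scalar G ->
  {in L, F =1 G} -> forall t, in_span L t -> F t = G t.
Proof.
move=> F_scalar G_scalar FG t; elim=> [|v /FG //|a x y _ Fx _ Fy].
  rewrite -(subrr 0).
  by rewrite (zmod_morphism_linear F_scalar) (zmod_morphism_linear G_scalar) !subrr.
by rewrite F_scalar G_scalar Fx Fy.
Qed.

Lemma formBl x y z : form (x - y) z = form x z - form y z.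
Proof. by rewrite !(form_conj z) (zmod_morphism_linear (form_scalar z)) rmorphB. Qed.

Lemma form_antilinear a x y z : form (a *: x + y) z = a^* * form x z + form y z.
Proof. by rewrite form_conj form_scalar rmorphD rmorphM /= -!form_conj. Qed.

(* Gram-Schmidt: if [t1] represents [form v] on [L] and [v] is not in the span
   of [L], then [v - t1] is orthogonal to [L]; correct the representative
   along it. *)
Lemma finite_riesz L (psi : V -> C) : scalar psi ->
  exists2 t, in_span L t & {in L, forall v, form t v = psi v}.
Proof.
elim: L psi => [|v L IHL] psi psi_scalar; first by exists 0; [exact: in_span0|].
have [t0 t0L t0P] := IHL psi psi_scalar.
have [t1 t1L t1P] := IHL (form v) (form_scalar v).
have [v_t1|v_neq_t1] := eqVneq v t1.
  exists t0; first exact: in_span_cons.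
  move=> w; rewrite inE => /predU1P[->|/t0P //].
  by rewrite v_t1; apply: scalar_eq_in_span t1L.
pose u := v - t1.
have u_orth w : w \in L -> form u w = 0 by move=> wL; rewrite formBl t1P // subrr.
have u_t1 : form u t1 = 0.
  apply: (scalar_eq_in_span (G := fun=> 0) (form_scalar u)) t1L => // a x y.
  by rewrite mulr0 addr0.
have u_v : form u v = form u u.
  by rewrite [in RHS](zmod_morphism_linear (form_scalar u)) u_t1 subr0.
have u_neq0 : form u u != 0.
  by apply: contra_neq v_neq_t1 => /form_definite /eqP; rewrite subr_eq0 => /eqP.
pose a := ((psi v - form t0 v) / form u u)^*.
exists (a *: u + t0).
  apply: in_span_lin; last exact: in_span_cons.
  have -> : u = (-1) *: t1 + v by rewrite scaleN1r addrC.
  by apply: in_span_lin; [exact: in_span_cons | apply: in_span_mem; rewrite mem_head].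
move=> w; rewrite inE form_antilinear conjCK => /predU1P[->|wL].
  by rewrite u_v mulfVK // subrK.
by rewrite (u_orth w wL) mulr0 add0r t0P.
Qed.
End FiniteRiesz.

Lemma triangular_system_eq (C : idomainType) (X : Type) (P Q : nat -> seq X -> C)
    (c : nat -> nat -> C) (h : X) (M : nat) :
  (forall n xs, (M <= n)%N -> P n xs = Q n xs) ->
  (forall n xs, size xs = n ->
     \sum_(0 <= k < M) c n k * P (n + k)%N (nseq k h ++ xs) =
     \sum_(0 <= k < M) c n k * Q (n + k)%N (nseq k h ++ xs)) ->
  (forall n, c n 0 != 0) ->
  forall n xs, size xs = n -> P n xs = Q n xs.
Proof.
move=> PQ_top PQ_sum c_diag.
suff PQ_below d n xs : (M <= n + d)%N -> size xs = n -> P n xs = Q n xs.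
  by move=> n xs; apply: (PQ_below M); rewrite leq_addl.
elim: d n xs => [|d IHd] n xs le_M size_xs; first by apply: PQ_top; rewrite -(addn0 n).
have [le_M_d|lt_M] := leqP M (n + d)%N; first exact: IHd.
have tails_eq : \sum_(1 <= k < M) c n k * P (n + k)%N (nseq k h ++ xs) =
                \sum_(1 <= k < M) c n k * Q (n + k)%N (nseq k h ++ xs).
  apply: eq_big_nat => k /andP[k_gt0 _]; congr (_ * _); apply: IHd.
    by rewrite (leq_trans le_M) // addnS addnAC -addn1 leq_add2l.
  by rewrite size_cat size_nseq size_xs addnC.
have M_gt0 : (0 < M)%N := leq_ltn_trans (leq0n _) lt_M.
have := PQ_sum n xs size_xs; rewrite (big_ltn M_gt0) [in RHS](big_ltn M_gt0).
by rewrite tails_eq addn0 => /addIr /(mulfI (c_diag n)).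
Qed.

Section SymmetricPairing.
Variables (R : realType) (H : lmodType R[i]) (ip : H -> H -> R[i]).
Variables (T : lmodType R[i]) (iota : T -> H).
Local Notation sym_eval := (sym_eval ip iota).
Local Notation fock_pair := (fock_pair ip iota).

Lemma sym_evalE n s fs : size s = n -> sym_eval s fs =
  (n`!%:R)^-1 * \sum_(r : 'S_n) \prod_(i < n) ip (nth 0 fs i) (iota (nth 0 s (r i))).
Proof. by move=> <-. Qed.

Lemma sym_eval_map m (f : 'I_m -> T) fs : sym_eval [seq f j | j <- enum 'I_m] fs =
  (m`!%:R)^-1 * \sum_(r : 'S_m) \prod_(i < m) ip (nth 0 fs i) (iota (f (r i))).
Proof.
rewrite (sym_evalE _ (etrans (size_map _ _) (size_enum_ord m))); congr (_ * _).
apply: eq_bigr => r _; apply: eq_bigr => i _.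
by rewrite (nth_map (r i)) ?size_enum_ord // nth_ord_enum.
Qed.

Lemma sym_eval_cons m s f fs : size s = m.+1 ->
  sym_eval s (f :: fs) = ((m.+1)`!%:R)^-1 *
    \sum_(r : 'S_m.+1) ip f (iota (nth 0 s (r ord0))) *
      sym_eval [seq nth 0 s (r (lift ord0 j)) | j <- enum 'I_m] fs.
Proof.
move=> size_s; rewrite (sym_evalE _ size_s); congr (_ * _).
pose P (r : 'S_m.+1) := \prod_(i < m.+1) ip (nth 0 (f :: fs) i) (iota (nth 0 s (r i))).
have P_lift (t : 'S_m) (r : 'S_m.+1) :
    P (lift_perm ord0 ord0 t * r)%g = ip f (iota (nth 0 s (r ord0))) *
    \prod_(i < m) ip (nth 0 fs i) (iota (nth 0 s (r (lift ord0 (t i))))).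
  rewrite /P big_ord_recl permM lift_perm_id; congr (_ * _).
  by apply: eq_bigr => i _; rewrite permM lift_perm_lift.
have m_fact_neq0 : (m`!%:R : R[i]) != 0 by rewrite pnatr_eq0 -lt0n fact_gt0.
transitivity ((m`!%:R)^-1 * \sum_(t : 'S_m) \sum_r P (lift_perm ord0 ord0 t * r)%g).
  have P_shift (t : 'S_m) : \sum_r P (lift_perm ord0 ord0 t * r)%g = \sum_r P r.
    exact/esym/(reindex_inj (mulgI _)).
  rewrite (eq_bigr _ (fun t _ => P_shift t)) sumr_const card_Sn.
  by rewrite -[X in _ * X]mulr_natl mulKf.
rewrite exchange_big mulr_sumr; apply: eq_bigr => r _.
under eq_bigr do rewrite P_lift.
by rewrite -mulr_sumr sym_eval_map mulrCA.
Qed.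

Definition fock_vectors (X : fock R T) : seq T := flatten [seq x.2 | x <- X].

Lemma mem_fock_vectors (X : fock R T) x v :
  x \in X -> v \in x.2 -> v \in fock_vectors X.
Proof. by move=> xX vx; apply/flattenP; exists x.2; first exact: map_f. Qed.

Lemma fock_vectors_cat X Y : fock_vectors (X ++ Y) = fock_vectors X ++ fock_vectors Y.
Proof. by rewrite /fock_vectors map_cat flatten_cat. Qed.

Lemma fock_pair_cat X Y n fs :
  fock_pair (X ++ Y) n fs = fock_pair X n fs + fock_pair Y n fs.
Proof. by rewrite /fock_pair big_cat. Qed.

Lemma fock_pair_flatten Xs n fs :
  fock_pair (flatten Xs) n fs = \sum_(X <- Xs) fock_pair X n fs.
Proof.
elim: Xs => [|X Xs IHXs]; first by rewrite big_nil /fock_pair big_nil.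
by rewrite /= fock_pair_cat IHXs big_cons.
Qed.

Lemma fock_pair_scale k X n fs :
  fock_pair (fock_scale k X) n fs = k * fock_pair X n fs.
Proof.
by rewrite /fock_pair big_map mulr_sumr; apply: eq_bigr => x _; rewrite mulrA.
Qed.

Lemma fock_pair_gt_maxdeg X n fs : (maxdeg X < n)%N -> fock_pair X n fs = 0.
Proof.
move=> lt_max_n; rewrite /fock_pair big_seq_cond big1 // => x /andP[xX /eqP size_x].
have size_le_max : (size x.2 <= maxdeg X)%N by apply: leq_bigmax_seq.
by move: lt_max_n; rewrite -size_x ltnNge size_le_max.
Qed.

End SymmetricPairing.

Definition ann_iter_coef {C : numClosedFieldType} (n k : nat) : C :=
  \prod_(i < k) sqrtC (n + i).+1%N%:R.

Section AnnihilationPairing.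
Variables (R : realType) (H : lmodType R[i]) (ip : H -> H -> R[i]).
Variables (T : lmodType R[i]) (iota : T -> H) (g : T -> R[i]) (h : H).
Local Notation fock_pair := (fock_pair ip iota).

Definition represents (X : fock R T) :=
  {in fock_vectors X, forall v, ip h (iota v) = pairing g v}.

Lemma fock_vectors_ann X : {subset fock_vectors (ann g X) <= fock_vectors X}.
Proof.
move=> v /flattenP[_ /mapP[y /flattenP[_ /mapP[[c s] cs_X ->] y_cs] ->]].
move: y_cs; rewrite /ann_gen /=.
case size_s: (size s) => [|m] //= /mapP[r _ ->] /mapP[j _ ->].
by apply: (mem_fock_vectors cs_X); rewrite mem_nth ?size_s.
Qed.

Lemma fock_pair_ann_gen c s m fs :
  {in s, forall v, ip h (iota v) = pairing g v} ->
  fock_pair (ann_gen g (c, s)) m fs =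
  if size s == m.+1 then sqrtC (m.+1)%:R * (c * sym_eval ip iota s (h :: fs)) else 0.
Proof.
move=> s_rep; rewrite /ann_gen /=.
case size_s: (size s) => [|m'] /=; first by rewrite /fock_pair big_nil.
rewrite /fock_pair big_map.
have [<-|m'_neq_m] := eqVneq m' m; last first.
  rewrite eqSS (negbTE m'_neq_m) big_pred0 // => r.
  by rewrite size_map size_enum_ord (negbTE m'_neq_m).
rewrite eqxx (eq_bigl xpredT); last by move=> r; rewrite /= size_map size_enum_ord eqxx.
rewrite big_enum (eq_bigl xpredT); last by move=> r; rewrite /= finset.in_setT.
rewrite (sym_eval_cons ip iota h fs size_s) !mulr_sumr; apply: eq_big => // r _ /=.
by rewrite -s_rep ?mem_nth ?size_s // !mulrA (mulrC c).
Qed.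

Lemma fock_pair_ann X m fs : represents X ->
  fock_pair (ann g X) m fs = sqrtC (m.+1)%:R * fock_pair X m.+1 (h :: fs).
Proof.
move=> X_rep; rewrite /ann fock_pair_flatten big_map.
transitivity (\sum_(x <- X) if size x.2 == m.+1
    then sqrtC (m.+1)%:R * (x.1 * sym_eval ip iota x.2 (h :: fs)) else 0).
  rewrite !big_seq; apply: eq_bigr => -[c s] cs_X.
  by apply: fock_pair_ann_gen => v vs; apply/X_rep/(mem_fock_vectors cs_X).
rewrite /fock_pair [in RHS]big_mkcond mulr_sumr; apply: eq_bigr => x _.
by case: ifP; rewrite ?mulr0.
Qed.

Lemma fock_pair_iter_ann k X n fs : represents X ->
  fock_pair (iter k (ann g) X) n fs =
  ann_iter_coef n k * fock_pair X (n + k)%N (nseq k h ++ fs).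
Proof.
elim: k X n fs => [|k IHk] X n fs X_rep.
  by rewrite /ann_iter_coef big_ord0 mul1r addn0.
have annX_rep : represents (ann g X) by move=> v /fock_vectors_ann /X_rep.
by rewrite iterSr IHk // fock_pair_ann // /ann_iter_coef big_ord_recr /= addnS mulrA.
Qed.

Lemma fock_pair_exp_ann X M n fs : represents X -> (maxdeg X < M)%N ->
  fock_pair (exp_ann g X) n fs = \sum_(0 <= k < M)
    (k`!%:R)^-1 * ann_iter_coef n k * fock_pair X (n + k)%N (nseq k h ++ fs).
Proof.
move=> X_rep lt_max_M.
rewrite (big_cat_nat (leq0n _) lt_max_M) /= [X in _ + X]big1_seq ?addr0 => [|k].
  rewrite /exp_ann fock_pair_flatten big_map; apply: eq_bigr => k _.
  by rewrite fock_pair_scale fock_pair_iter_ann // mulrA.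
rewrite mem_index_iota => /andP[_ /andP[lt_max_k _]].
by rewrite fock_pair_gt_maxdeg ?mulr0 // (leq_trans lt_max_k) ?leq_addl.
Qed.

End AnnihilationPairing.

Lemma pairing_scalar (R : realType) (T : lmodType R[i]) (g : T -> R[i]) :
  (forall a x y, g (a *: x + y) = a^* * g x + g y) -> scalar (pairing g).
Proof.
by move=> g_antilinear a x y; rewrite /pairing g_antilinear rmorphD rmorphM /= conjCK.
Qed.

Theorem proposition2p9 (R : realType) (H : lmodType R[i]) (ip : H -> H -> R[i])
    (T : topologicalLmodType R[i]) (iota : T -> H) (g : T -> R[i]) :
  is_hilbert ip ->
  continuous_dense_embedding ip iota ->
  in_antidual g ->
  forall Psi Phi : fock R T,
    fock_eq ip iota (exp_ann g Psi) (exp_ann g Phi) ->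
    fock_eq ip iota Psi Phi.
Proof.
move=> [[ip_scalar ip_conj _ ip_definite] _] [iota_linear iota_inj _ _] [g_antilinear _].
move=> Psi Phi exp_eq.
have iota0 : iota 0 = 0.
  by rewrite -(subrr (0 : T)) (zmod_morphism_linear iota_linear) subrr.
have [t _ t_rep] : exists2 t, in_span (fock_vectors (Psi ++ Phi)) t &
    {in fock_vectors (Psi ++ Phi), forall v, ip (iota t) (iota v) = pairing g v}.
  apply: (finite_riesz (form := fun s t => ip (iota s) (iota t))) (pairing_scalar g_antilinear).
  - by move=> x a y z; rewrite /= iota_linear ip_scalar.
  - by move=> x y; apply: ip_conj.
  - by move=> x /ip_definite; rewrite -iota0 => /iota_inj.
have [Psi_rep Phi_rep] :
    represents ip iota g (iota t) Psi /\ represents ip iota g (iota t) Phi.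
  by split=> v v_in; apply: t_rep; rewrite fock_vectors_cat mem_cat v_in ?orbT.
pose M := (maxdeg Psi + maxdeg Phi).+1.
have [lt_Psi_M lt_Phi_M] : (maxdeg Psi < M)%N /\ (maxdeg Phi < M)%N.
  by rewrite !ltnS leq_addr leq_addl.
apply: (triangular_system_eq (h := iota t) (M := M)
          (c := fun n k => (k`!%:R)^-1 * ann_iter_coef n k)).
- move=> n fs le_M_n.
  by rewrite !fock_pair_gt_maxdeg // ?(leq_trans lt_Psi_M) ?(leq_trans lt_Phi_M).
- move=> n fs size_fs; have := exp_eq n fs size_fs.
  by rewrite (fock_pair_exp_ann n fs Psi_rep lt_Psi_M)
             (fock_pair_exp_ann n fs Phi_rep lt_Phi_M).
- by move=> n; rewrite /ann_iter_coef big_ord0 fact0 invr1 mulr1 oner_neq0.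
Qed.
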